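(* Let $G$ be a connected bipartite graph with $G\not\cong K_2$. Then $\chi'_{2}(\overleftrightarrow{G}) = \chi'_{1,2}(\overleftrightarrow{G})$.
   Context: For a simple graph $G$, the symmetric digraph $\overleftrightarrow{G}$ is obtained by replacing each edge $uv$ of $G$ by the pair of opposite arcs $\overrightarrow{uv}$ and $\overrightarrow{vu}$. A monochromatic 2-path is a pair of arcs $\overrightarrow{uv},\overrightarrow{vw}$ with $w\neq u$ of the same colour; a monochromatic 2-cycle is a pair $\overrightarrow{uv},\overrightarrow{vu}$ of the same colour. $\chi'_{1,2}(\overleftrightarrow{G})$ is the least number of colours in an arc-colouring of $\overleftrightarrow{G}$ with no monochromatic 2-cycles and no monochromatic 2-paths; $\chi'_{2}(\overleftrightarrow{G})$ is the least number of colours in an arc-colouring of $\overleftrightarrow{G}$ with no monochromatic 2-paths (monochromatic 2-cycles allowed). *)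

From mathcomp Require Import all_boot.
Set Implicit Arguments. Unset Strict Implicit. Unset Printing Implicit Defensive.

Record sgraph (T : finType) := SGraph {
  adj : rel T;
  adj_sym : symmetric adj;
  adj_irr : irreflexive adj }.

Section Defs.
Variables (T : finType) (G : sgraph T).

Definition connected_graph : Prop := forall x y : T, connect (adj G) x y.

Definition bipartite : Prop :=
  exists A : {set T}, forall x y, adj G x y -> (x \in A) != (y \in A).

Definition iso_K2 : Prop :=
  exists f : T -> 'I_2, bijective f /\ forall x y, adj G x y = (f x != f y).

(* An arc colouring of the symmetric digraph with k colours: a colour for
   every ordered pair (u,v); only pairs with adj G u v (arcs) matter. *)
Definition no_mono_2path k (c : {ffun T * T -> 'I_k}) : bool :=
  [forall u, forall v, forall w,
     [&& adj G u v, adj G v w & w != u] ==> (c (u, v) != c (v, w))].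

Definition no_mono_2cycle k (c : {ffun T * T -> 'I_k}) : bool :=
  [forall u, forall v, adj G u v ==> (c (u, v) != c (v, u))].

Definition col2 (k : nat) : bool :=
  [exists c : {ffun T * T -> 'I_k}, no_mono_2path c].

Definition col12 (k : nat) : bool :=
  [exists c : {ffun T * T -> 'I_k}, no_mono_2path c && no_mono_2cycle c].

Lemma col12_exists : exists k, col12 k.
Proof.
exists #|{: T * T}|; apply/existsP.
exists [ffun p => enum_rank p]; apply/andP; split.
- apply/forallP => u; apply/forallP => v; apply/forallP => w.
  apply/implyP => /and3P [huv _ _]; rewrite !ffunE.
  apply/negP => /eqP /enum_rank_inj [Euv _].
  by move: huv; rewrite Euv adj_irr.
- apply/forallP => u; apply/forallP => v; apply/implyP => huv; rewrite !ffunE.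
  apply/negP => /eqP /enum_rank_inj [Euv _].
  by move: huv; rewrite Euv adj_irr.
Qed.

Lemma col2_exists : exists k, col2 k.
Proof.
have [k /existsP [c /andP [h _]]] := col12_exists.
by exists k; apply/existsP; exists c.
Qed.

Definition chi2 : nat := ex_minn col2_exists.
Definition chi12 : nat := ex_minn col12_exists.

End Defs.

(* Always chi'_2 <= chi'_{1,2}, and colouring every arc by the side of its
   tail shows chi'_{1,2} <= 2 for a bipartite graph.  If G contains a path
   u v w on three vertices, the arcs uv and vw form a 2-path, so
   chi'_2 >= 2 and both invariants equal 2.  Otherwise every vertex has degree
   at most 1: a connected such graph is either K_2 (excluded) or has no edge,
   and without arcs the two colouring conditions coincide. *)
From mathcomp Require Import all_boot.
Set Implicit Arguments. Unset Strict Implicit. Unset Printing Implicit Defensive.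

Section ArcColourings.
Variables (T : finType) (G : sgraph T).

Lemma col12_col2 k : col12 G k -> col2 G k.
Proof. by case/existsP => c /andP [c_2path _]; apply/existsP; exists c. Qed.

Lemma edgeless_col2_col12 k : (forall x y, ~~ adj G x y) -> col2 G k -> col12 G k.
Proof.
move=> edgeless /existsP [c c_2path]; apply/existsP; exists c.
rewrite c_2path; apply/forallP => u; apply/forallP => v.
by rewrite (negbTE (edgeless u v)).
Qed.

Lemma bipartite_col12 : bipartite G -> col12 G 2.
Proof.
case=> A sideA; apply/existsP.
exists [ffun p : T * T => if p.1 \in A then (ord0 : 'I_2) else ord_max].
apply/andP; split.
- apply/forallP => u; apply/forallP => v; apply/forallP => w.
  apply/implyP => /and3P [huv _ _]; rewrite !ffunE /=.
  by move: (sideA _ _ huv); case: (u \in A); case: (v \in A).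
- apply/forallP => u; apply/forallP => v; apply/implyP => huv; rewrite !ffunE /=.
  by move: (sideA _ _ huv); case: (u \in A); case: (v \in A).
Qed.

Lemma col2_gt1 u v w k :
  adj G u v -> adj G v w -> w != u -> col2 G k -> 1 < k.
Proof.
move=> huv hvw hwu /existsP [c /forallP /(_ u) /forallP /(_ v) /forallP /(_ w)].
rewrite huv hvw hwu /=; apply: contraR; rewrite -leqNgt => k_le1.
apply/eqP/val_inj.
have := ltn_ord (c (u, v)); have := ltn_ord (c (v, w)).
by case: k k_le1 c => [|[|]] //= _ c; do 2!case: (nat_of_ord _).
Qed.

Lemma chi2_min k : col2 G k -> chi2 G <= k.
Proof. by rewrite /chi2; case: ex_minnP => m _; apply. Qed.

Lemma chi12_min k : col12 G k -> chi12 G <= k.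
Proof. by rewrite /chi12; case: ex_minnP => m _; apply. Qed.

Lemma col2_chi2 : col2 G (chi2 G).
Proof. by rewrite /chi2; case: ex_minnP. Qed.

Lemma col12_chi12 : col12 G (chi12 G).
Proof. by rewrite /chi12; case: ex_minnP. Qed.

Lemma chi2_le_chi12 : chi2 G <= chi12 G.
Proof. exact/chi2_min/col12_col2/col12_chi12. Qed.

End ArcColourings.

Section P3Free.
Variables (T : finType) (G : sgraph T).

Definition P3_free : Prop := forall a b c, adj G a b -> adj G b c -> c = a.

Lemma P3_or_P3_free :
  (exists u v w, [/\ adj G u v, adj G v w & w != u]) \/ P3_free.
Proof.
have [/existsP [u /existsP [v /existsP [w /and3P [huv hvw hwu]]]] | noP3] :=
  boolP [exists u, exists v, exists w, [&& adj G u v, adj G v w & w != u]].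
  by left; exists u, v, w.
right=> a b c hab hbc; apply/eqP; apply: contraNT noP3 => hca.
by apply/existsP; exists a; apply/existsP; exists b; apply/existsP; exists c;
  rewrite hab hbc hca.
Qed.

Lemma edge_or_edgeless : (exists x y, adj G x y) \/ (forall x y, ~~ adj G x y).
Proof.
have [/existsP [x /existsP [y hxy]] | noedge] := boolP [exists x, exists y, adj G x y].
  by left; exists x, y.
right=> x y; apply: contraNN noedge => hxy.
by apply/existsP; exists x; apply/existsP; exists y.
Qed.

Hypothesis G_P3_free : P3_free.
Variables (x y : T).
Hypothesis hxy : adj G x y.

Lemma P3_free_edge_closed : closed (adj G) (pred2 x y).
Proof.
have hyx : adj G y x by rewrite adj_sym.
have side a b : adj G a b -> pred2 x y a -> pred2 x y b.
  move=> hab /pred2P [] Ea; rewrite {}Ea in hab.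
  - by rewrite /= (G_P3_free hyx hab) eqxx orbT.
  - by rewrite /= (G_P3_free hxy hab) eqxx.
move=> a b hab; apply/idP/idP; first exact: side.
by apply: side; rewrite adj_sym.
Qed.

Lemma connected_P3_free_K2 : connected_graph G -> iso_K2 G.
Proof.
move=> G_conn.
have vertices z : (z == x) || (z == y).
  by have := closed_connect P3_free_edge_closed (G_conn x z); rewrite !inE eqxx => <-.
have y_neq_x : (y == x) = false by apply: contraTF hxy => /eqP ->; rewrite adj_irr.
exists (fun z => if z == x then (ord0 : 'I_2) else ord_max); split.
  exists (fun i : 'I_2 => if i == ord0 then x else y).
    move=> z; case: (eqVneq z x) => [-> //| z_neq_x].
    by move: (vertices z); rewrite (negbTE z_neq_x) => /eqP.
  by case=> [[|[|]] ?] //=; rewrite ?eqxx ?y_neq_x //; apply: val_inj.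
have hyx : adj G y x by rewrite adj_sym.
move=> a b; move: (vertices a) (vertices b) => /orP [] /eqP -> /orP [] /eqP ->;
  by rewrite ?eqxx ?y_neq_x ?adj_irr ?hxy ?hyx.
Qed.

End P3Free.

Theorem mainTheorem5 (T : finType) (G : sgraph T) :
  connected_graph G -> bipartite G -> ~ iso_K2 G -> chi2 G = chi12 G.
Proof.
move=> G_conn G_bip notK2; apply/eqP; rewrite eqn_leq chi2_le_chi12 /=.
have [[u [v [w [huv hvw hwu]]]] | G_P3_free] := P3_or_P3_free G.
  have chi12_le2 := chi12_min (bipartite_col12 G_bip).
  exact: leq_trans chi12_le2 (col2_gt1 huv hvw hwu (col2_chi2 G)).
have [[x [y hxy]] | edgeless] := edge_or_edgeless G.
  by case: (notK2 (connected_P3_free_K2 G_P3_free hxy G_conn)).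
exact/chi12_min/edgeless_col2_col12/col2_chi2.
Qed.
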